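(* Let $p>0$ and let $X$ be a non-negative random variable which is $u^{1-p}$-insensitive, i.e. $\mathbb{P}(X>u\pm u^{1-p})\sim\mathbb{P}(X>u)$ as $u\to\infty$. Then for every constant $B>0$, $$\lim_{u\to\infty}\frac{\exp(-Bu^{p})}{\mathbb{P}(X>u)}=0.$$
   Context: $a_1(u)\sim a_2(u)$ means $a_1(u)/a_2(u)\to1$ as $u\to\infty$. *)

From HB Require Import structures.
From mathcomp Require Import all_boot all_order all_algebra.
From mathcomp Require Import all_classical all_reals all_analysis.
Set Implicit Arguments. Unset Strict Implicit. Unset Printing Implicit Defensive.
Import Order.TTheory GRing.Theory Num.Theory.
Local Open Scope classical_set_scope.
Local Open Scope ring_scope.

Definition tailP (d : measure_display) (T : measurableType d) (R : realType)
  (P : probability T R) (X : {RV P >-> R}) (u : R) : R :=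
  fine (P [set t | u < X t]).

From HB Require Import structures.
From mathcomp Require Import all_boot all_order all_algebra.
From mathcomp Require Import all_classical all_reals all_analysis.
From mathcomp Require Import ring lra.
Import Order.TTheory GRing.Theory Num.Theory.
Import numFieldNormedType.Exports.
Local Open Scope classical_set_scope.
Local Open Scope ring_scope.

(** If P(X > u - u^(1-p)) <= e^del P(X > u) for all large u, then, since the
    step u |-> u - u^(1-p) lowers u^p by at least p/2, iterating it from u down
    to a fixed level M takes about 2 u^p / p steps; hence
    P(X > u) >= C exp(-(2 del / p) u^p).  As del > 0 is arbitrary, the tail
    dominates exp(-(B/2) u^p), which beats exp(-B u^p).  Only the
    [u - u^(1-p)] half of the insensitivity (and no sign condition on X)
    is needed. *)

Section tail_probability.
Context {d : measure_display} {T : measurableType d} {R : realType}.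
Context {P : probability T R} (X : {RV P >-> R}).

Lemma tailP_ge0 (u : R) : 0 <= tailP X u.
Proof. exact: fine_ge0. Qed.

Lemma tailP_le : {homo tailP X : u v /~ u <= v}.
Proof.
have mtail (w : R) : measurable [set t | w < X t].
  rewrite [X in measurable X](_ : _ = X @^-1` `]w, +oo[%classic).
    exact: measurable_funPTI.
  by apply/seteqP; split=> t /=; rewrite in_itv /= andbT.
move=> u v uv; apply: fine_le; rewrite ?fin_num_measure ?inE //.
by apply: le_measure; rewrite ?inE // => t /=; apply: le_lt_trans.
Qed.

End tail_probability.

Section powR_facts.
Variable R : realType.
Implicit Types p a u x : R.

Lemma powR_gt_of_root_lt p a x : 0 < p -> 0 <= a -> a `^ p^-1 < x -> a < x `^ p.
Proof.
move=> p0 a0 ax; have r0 : 0 <= a `^ p^-1 by apply: powR_ge0.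
have := gt0_ltr_powR p0 r0 (le_trans r0 (ltW ax)) ax.
by rewrite -powRrM mulVf ?gt_eqF // powRr1.
Qed.

Lemma powR_cvgy p : 0 < p -> x `^ p @[x --> +oo] --> +oo.
Proof.
move=> p0; apply/cvgryPge => A; near=> x.
apply/ltW/(le_lt_trans (ler_norm A))/powR_gt_of_root_lt; [exact: p0|exact: normr_ge0|].
by near: x; apply: nbhs_pinfty_gt; exact: num_real.
Unshelve. end_near. Qed.

Lemma expR_powR_cvg0 k p : 0 < k -> 0 < p ->
  expR (- (k * x `^ p)) @[x --> +oo] --> 0.
Proof.
move=> k0 p0; apply: (cvg_comp _ _ _ (@cvgr_expR R)).
apply/cvgryPge => A; near=> x.
rewrite -ler_pdivrMl //.
by near: x; move/cvgryPge: (powR_cvgy _ p0); apply.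
Unshelve. end_near. Qed.

(* [(u - u^(1-p))^p = u^p (1 - u^-p)^p <= u^p / (1 + p u^-p) <= u^p - p/2]. *)
Lemma powR_descent_step p u : 0 < p -> 1 <= u -> p + 2 <= u `^ p ->
  0 <= u - u `^ (1 - p) /\ (u - u `^ (1 - p)) `^ p <= u `^ p - p / 2.
Proof.
move=> p0 u_ge1 up_large; set a := u `^ p.
have a0 : 0 < a by rewrite (lt_le_trans _ up_large) // addr_gt0.
have u0 : 0 < u by rewrite (lt_le_trans _ u_ge1).
have aV_le : a^-1 <= 2^-1.
  by rewrite lef_pV2 ?posrE //; apply: le_trans up_large; rewrite lerDr ltW.
have aV_lt1 : a^-1 < 1 by rewrite (le_lt_trans aV_le) // invf_lt1 // ltr1n.
have t0 : 0 < 1 - a^-1 by rewrite subr_gt0.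
have -> : u - u `^ (1 - p) = u * (1 - a^-1).
  rewrite powRB ?(gt_eqF u0) ?implybT // powRr1 ?ltW //.
  by rewrite mulrBr mulr1.
split; first by rewrite mulr_ge0 // ltW.
rewrite powRM ?(ltW u0) ?(ltW t0) // -/a.
have pow_le_expR : (1 - a^-1) `^ p <= expR (- (p / a)).
  rewrite /powR (gt_eqF t0) ler_expR -mulrN ler_pM2l //.
  by apply: le_ln1Dx; rewrite ltrN2.
have expR_le_inv : expR (- (p / a)) <= (1 + p / a)^-1.
  by rewrite expRN lef_pV2 ?posrE ?expR_gt0 ?expR_ge1Dx ?addr_gt0 ?divr_gt0.
apply: le_trans (ler_wpM2l (ltW a0) (le_trans pow_le_expR expR_le_inv)) _.
have p_le_a : p <= a by apply: le_trans up_large; rewrite lerDl.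
set q := p / a.
have aq : a * q = p by rewrite /q mulrCA divff ?gt_eqF ?mulr1.
have q_le1 : q <= 1 by rewrite /q ler_pdivrMr // mul1r.
rewrite -/(a / (1 + q)) ler_pdivrMr ?addr_gt0 ?divr_gt0 //.
nra.
Qed.

End powR_facts.

Section descent.
Context {R : realType} {f s : R -> R} {p c del M : R}.
Hypotheses (p0 : 0 < p) (del0 : 0 <= del) (M0 : 0 <= M) (fM0 : 0 <= f M).
Hypothesis f_noninc : {homo f : x y /~ x <= y}.
Hypothesis step : forall u, M < u ->
  [/\ 0 <= s u, s u `^ p <= u `^ p - c & f (s u) <= expR del * f u].

Lemma descent_lower_bound n u : 0 <= u -> u `^ p <= M `^ p + c * n%:R ->
  expR (- (del * n%:R)) * f M <= f u.
Proof.
elim: n u => [|n IH] u u0 hu.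
  rewrite mulr0 oppr0 expR0 mul1r; apply: f_noninc; rewrite leNgt.
  by apply/negP => Mu; move: hu; rewrite mulr0 addr0 leNgt gt0_ltr_powR ?nnegrE.
have [uM|Mu] := leP u M.
  apply: le_trans _ (f_noninc _ _ uM).
  by rewrite ler_piMl // expR_le1 oppr_le0 mulr_ge0.
have [su0 su_le fsu] := step _ Mu.
have IHs : expR (- (del * n%:R)) * f M <= expR del * f u.
  apply: le_trans (IH _ su0 _) fsu; apply: le_trans su_le _.
  by move: hu; rewrite mulrSr mulrDr mulr1; lra.
have := ler_wpM2l (expR_ge0 (- del)) IHs.
by rewrite !mulrA -!expRD addNr expR0 mul1r mulrSr mulrDr mulr1 opprD addrC.
Qed.

Lemma descent_expR_lower_bound u : 0 < c -> 0 <= u ->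
  expR (- del) * f M * expR (- (del / c * u `^ p)) <= f u.
Proof.
move=> c0 u0; set n := (Num.trunc (u `^ p / c)).+1.
apply: le_trans _ (descent_lower_bound n u u0 _).
  rewrite mulrAC -expRD ler_wpM2r // ler_expR lerNr opprD !opprK.
  rewrite mulrAC -mulrA -[X in X + _]mulr1 -mulrDr ler_wpM2l //.
  by rewrite /n mulrS lerD2l truncn_le divr_ge0 ?powR_ge0 ?ltW.
rewrite -[u `^ p]add0r lerD ?powR_ge0 // -ler_pdivrMl // mulrC.
exact/ltW/truncnS_gt.
Qed.

End descent.

Lemma ratio_cvg1_near {R : realType} {T : Type} {F : set_system T} {FF : Filter F}
    {f g : T -> R} : (forall x, 0 <= f x) -> (g x / f x) @[x --> F] --> (1 : R) ->
  forall e, 1 < e -> \forall x \near F, 0 < f x /\ g x <= e * f x.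
Proof.
move=> f0 gf1 e e1; near=> x.
have ratio_gt0 : 0 < g x / f x by near: x; exact: cvgr_gt gf1 _ ltr01.
have ratio_lte : g x / f x < e by near: x; exact: cvgr_lt gf1 _ e1.
(* The ratio is positive, hence [f x > 0]: [g x / 0 = 0] would give ratio [0]. *)
have fx0 : 0 < f x.
  rewrite lt_neqAle f0 andbT; apply: contraTneq ratio_gt0 => <-.
  by rewrite invr0 mulr0 ltxx.
by split=> //; rewrite -ler_pdivrMr // ltW.
Unshelve. all: end_near. Qed.

Lemma expR_powR_lower_bound {R : realType} {f : R -> R} {p k : R} :
  0 < p -> 0 < k -> (forall x, 0 <= f x) -> {homo f : x y /~ x <= y} ->
  (forall e, 1 < e -> \forall x \near +oo%R, 0 < f x /\ f (x - x `^ (1 - p)) <= e * f x) ->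
  exists2 K, 0 < K & \forall x \near +oo%R, 0 < f x /\ expR (- (k * x `^ p)) <= K * f x.
Proof.
move=> p0 k0 f0 f_noninc f_step.
set c := p / 2; set del := k * c.
have c0 : 0 < c by rewrite divr_gt0.
have del0 : 0 < del by rewrite mulr_gt0.
have edel1 : 1 < expR del by rewrite expR_gt1.
have [M0 [_ HM0]] : \forall x \near +oo%R,
    [/\ 1 <= x, p + 2 <= x `^ p, 0 < f x & f (x - x `^ (1 - p)) <= expR del * f x].
  near=> x.
  have [fx0 fx_step] : 0 < f x /\ f (x - x `^ (1 - p)) <= expR del * f x.
    by near: x; exact: f_step.
  split; [| |exact: fx0|exact: fx_step].
    by near: x; apply: nbhs_pinfty_ge; exact: num_real.
  apply/ltW/powR_gt_of_root_lt; [exact: p0|by rewrite addr_ge0 ?ltW|].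
  by near: x; apply: nbhs_pinfty_gt; exact: num_real.
set M := Num.max M0 0 + 1.
have M0M : M0 < M by rewrite /M ltr_pwDr // le_max lexx.
have M_ge0 : 0 <= M by rewrite /M addr_ge0 // le_max lexx orbT.
have [_ _ fM0 _] := HM0 _ M0M.
exists (expR del / f M); first by rewrite divr_gt0 ?expR_gt0.
near=> x; have x_gt_M : M < x by near: x; apply: nbhs_pinfty_gt; exact: num_real.
have [_ _ fx0 _] := HM0 _ (lt_trans M0M x_gt_M).
split=> //.
have step u : M < u -> [/\ 0 <= u - u `^ (1 - p),
    (u - u `^ (1 - p)) `^ p <= u `^ p - c & f (u - u `^ (1 - p)) <= expR del * f u].
  move=> Mu; have [u_ge1 up_large _ fu_step] := HM0 _ (lt_trans M0M Mu).
  by have [] := @powR_descent_step _ p u p0 u_ge1 up_large.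
have := descent_expR_lower_bound p0 (ltW del0) M_ge0 (ltW fM0) f_noninc step x
  c0 (le_trans M_ge0 (ltW x_gt_M)).
have -> : del / c = k by rewrite /del mulfK ?gt_eqF.
rewrite mulrC -ler_pdivlMr ?mulr_gt0 ?expR_gt0 //.
suff -> : expR del / f M * f x = f x / (expR (- del) * f M) by [].
by rewrite invfM (expRN del) invrK mulrC.
Unshelve. all: end_near. Qed.

Theorem lemma5p1 (d : measure_display) (T : measurableType d) (R : realType)
  (P : probability T R) (X : {RV P >-> R}) (p : R)
  (hp : 0 < p)
  (hX : forall t, 0 <= X t)
  (hplus : (tailP X (x + x `^ (1 - p)) / tailP X x) @[x --> +oo%R] --> (1 : R))
  (hminus : (tailP X (x - x `^ (1 - p)) / tailP X x) @[x --> +oo%R] --> (1 : R)) :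
  forall B : R, 0 < B ->
    (expR (- B * x `^ p) / tailP X x) @[x --> +oo%R] --> (0 : R).
Proof.
move=> B B0; have B20 : 0 < B / 2 by rewrite divr_gt0.
have [K K0 lower] := expR_powR_lower_bound hp B20 (tailP_ge0 X) (tailP_le X)
  (ratio_cvg1_near (tailP_ge0 X) hminus).
apply: (@squeeze_cvgr _ _ _ _ (cst 0) (fun x => K * expR (- (B / 2 * x `^ p)))).
- apply: filterS lower => x [fx0 lb].
  rewrite divr_ge0 ?expR_ge0 ?(ltW fx0) //= ler_pdivrMr //.
  rewrite (_ : - B * x `^ p = - (B / 2 * x `^ p) + - (B / 2 * x `^ p)); last by field.
  by rewrite expRD [leRHS]mulrAC ler_wpM2r ?expR_ge0.
- exact: cvg_cst.
- by rewrite -(mulr0 K); apply: cvgM; [exact: cvg_cst|exact: expR_powR_cvg0].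
Qed.
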